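(* Let $S$ be a $C^1$-differentiable semigroup in which idempotents commute pairwise. Then the set $E(S)$ of idempotents is discrete in the subspace topology.
   Context: A $C^1$-differentiable semigroup is a topological semigroup $S$ which is a $C^1$ manifold modelled on a Banach space and whose multiplication $S\times S\to S$ is of class $C^1$. $E(S)=\{e: e^2=e\}$. For an idempotent $f$, $G_f$ denotes the maximal subgroup of $S$ containing $f$ (the largest subgroup of $S$ with identity $f$); distinct idempotents have disjoint maximal subgroups. Known fact (Holmes) that may be used: for every $e\in E(S)$ there is an open neighbourhood $U_e$ of $e$ such that $fxf\in G_f$ for all $f\in E(S)\cap U_e$ and all $x\in U_e$. *)

From HB Require Import structures.
From mathcomp Require Import all_boot all_order all_algebra.
From mathcomp Require Import all_classical all_reals all_analysis.
Set Implicit Arguments. Unset Strict Implicit. Unset Printing Implicit Defensive.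
Import Order.TTheory GRing.Theory Num.Theory.
Import numFieldNormedType.Exports.
Local Open Scope classical_set_scope.
Local Open Scope ring_scope.

(* f is of class C^1 on the (open) set O: Frechet differentiable at every
   point of O, and the derivative x |-> 'd f x is continuous on O for the
   operator norm (written out: for every eps > 0, near x,
   ||'d f y - 'd f x||_op <= eps). *)
Definition C1_on {R : realType} {V W : normedModType R}
  (O : set V) (f : V -> W) : Prop :=
  (forall x, O x -> differentiable f x) /\
  (forall x, O x -> forall eps : R, 0 < eps ->
     \forall y \near x, forall v : V, `|'d f y v - 'd f x v| <= eps * `|v|).

Definition is_chart {R : realType} {E : normedModType R} {S : topologicalType}
  (U : set S) (phi : S -> E) (psi : E -> S) : Prop :=
  [/\ open U, open (phi @` U),
      (forall x, U x -> psi (phi x) = x),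
      {within U, continuous phi} &
      {within phi @` U, continuous psi}].

(* A C^1-differentiable semigroup: a (Hausdorff) topological semigroup
   (S, mul) which is a C^1 manifold modelled on the real Banach space E
   (an atlas with C^1 transition maps) and whose multiplication is C^1
   (its local representatives in product charts are C^1). *)
Definition C1_differentiable_semigroup {R : realType}
  (E : completeNormedModType R) (S : topologicalType) (mul : S -> S -> S) : Prop :=
  [/\ hausdorff_space S, associative mul,
      continuous (fun p : S * S => mul p.1 p.2) &
      exists (I : Type) (U : I -> set S) (phi : I -> S -> E) (psi : I -> E -> S),
        [/\ (forall i, is_chart (U i) (phi i) (psi i)),
            (forall x, exists i, U i x),
            (forall i j, C1_on (phi i @` (U i `&` U j)) (phi j \o psi i)) &
            (forall i j k,
               C1_on [set ab : E * E | (phi i @` U i) ab.1 /\ (phi j @` U j) ab.2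
                                       /\ U k (mul (psi i ab.1) (psi j ab.2))]
                     (fun ab : E * E => phi k (mul (psi i ab.1) (psi j ab.2))))]].

Definition idempotents {S : Type} (mul : S -> S -> S) : set S :=
  [set e | mul e e = e].

(* Read the multiplication in a chart around the idempotent e as a C^1 map M
   with M(c, c) = c.  If a and b are the chart images of idempotents x, y with
   xy = yx = y, then (M(b,b) - M(b,a)) - (M(a,b) - M(a,a)) = a - b, whereas the
   mean value inequality, applied in the second variable, bounds this difference
   by |b - a| / 2 as long as 'd M stays within 1/4 of 'd M(c, c); hence a = b.
   For an idempotent f close to e, the idempotent ef is still close to e and,
   idempotents commuting, lies below both e and f; so e = ef = f. *)

From HB Require Import structures.
From mathcomp Require Import all_boot all_order all_algebra.
From mathcomp Require Import all_classical all_reals all_analysis.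
From mathcomp Require Import lra.
Import Order.TTheory GRing.Theory Num.Theory.
Import numFieldNormedType.Exports.
Local Open Scope classical_set_scope.
Local Open Scope ring_scope.

Section LocalLipschitz.
Variables (R : realType) (W : normedModType R) (h : R -> W) (c : R).
Hypothesis h_loc : forall t, 0 <= t <= 1 -> exists2 del, 0 < del &
  forall s, `|s - t| < del -> `|h s - h t| <= c * `|s - t|.

Let A := [set t : R | 0 <= t <= 1 /\ forall u, 0 <= u <= t -> `|h u - h 0| <= c * u].

Let A0 : A 0.
Proof.
split; first by rewrite lexx ler01.
move=> u /andP[u0 u1]; have -> : u = 0 by apply/eqP; rewrite eq_le u0 u1.
by rewrite subrr normr0 mulr0.
Qed.

Let A_ub1 : ubound A 1.
Proof. by move=> t [/andP[_ ->]]. Qed.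

Let A_has_sup : has_sup A.
Proof. by split; [exists 0 | exists 1]. Qed.

Let supA01 : 0 <= sup A <= 1.
Proof. by rewrite sup_upper_bound //= ge_sup //; exists 0. Qed.

Let below_supA u : 0 <= u < sup A -> `|h u - h 0| <= c * u.
Proof.
move=> /andP[u0 us]; have [y [_ Ay] uy] := sup_gt (ex_intro _ 0 A0) us.
by apply: Ay; rewrite u0 ltW.
Qed.

Let at_supA : `|h (sup A) - h 0| <= c * sup A.
Proof.
have s01 := supA01; have below_s := below_supA.
set s := sup A in s01 below_s *.
have [->|s_neq0] := eqVneq s 0; first by rewrite subrr normr0 mulr0.
have s_gt0 : 0 < s by rewrite lt_neqAle eq_sym s_neq0; case/andP: s01.
have [del del0 Hdel] := h_loc _ s01.
pose u := Num.max 0 (s - del / 2).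
have us : u < s by rewrite gt_max s_gt0 /=; lra.
have u0 : 0 <= u by rewrite le_max lexx.
have su : `|u - s| = s - u by rewrite distrC ger0_norm // subr_ge0 ltW.
have /Hdel : `|u - s| < del.
  rewrite su; suff : s - del / 2 <= u by lra.
  by rewrite le_max lexx orbT.
rewrite su => hus.
have -> : h s - h 0 = (h u - h 0) - (h u - h s).
  by rewrite [RHS]addrC opprB addrA subrK.
apply: le_trans (ler_normB _ _) _.
have -> : c * s = c * u + c * (s - u) by rewrite -mulrDr addrC subrK.
by apply: lerD => //; apply: below_s; rewrite u0 us.
Qed.

Let supA_eq1 : sup A = 1.
Proof.
have s01 := supA01; have below_s := below_supA; have at_s := at_supA.
set s := sup A in s01 below_s at_s *.
have [s0 s1] := andP s01.
apply/eqP; rewrite eq_le s1 /= leNgt; apply/negP => s_lt1.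
have [del del0 Hdel] := h_loc _ s01.
pose t := Num.min 1 (s + del / 2).
have st : s < t by rewrite lt_min s_lt1 /=; lra.
have At : A t.
  split; first by rewrite (le_trans s0 (ltW st)) /= ge_min lexx.
  move=> u /andP[u0 ut]; have [us|su] := ltP u s.
    by apply: below_s; rewrite u0 us.
  have /Hdel : `|u - s| < del.
    rewrite ger0_norm ?subr_ge0 //; suff : t <= s + del / 2 by lra.
    by rewrite ge_min lexx orbT.
  rewrite ger0_norm ?subr_ge0 // => hsu.
  have -> : h u - h 0 = (h u - h s) + (h s - h 0) by rewrite addrA subrK.
  apply: le_trans (ler_normD _ _) _.
  have -> : c * u = c * (u - s) + c * s by rewrite -mulrDr subrK.
  exact: lerD.
have := sup_upper_bound A_has_sup At.
rewrite -/s; lra.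
Qed.

Lemma local_lipschitz_norm_sub01 : `|h 1 - h 0| <= c.
Proof. by have := at_supA; rewrite supA_eq1 mulr1. Qed.

End LocalLipschitz.

Section MeanValueInequality.
Variables (R : realType) (V W : normedModType R).

Lemma differentiable_remainder_small {f : V -> W} {x : V} : differentiable f x ->
  forall eps : R, 0 < eps -> exists2 del : R, 0 < del &
    forall v, `|v| < del -> `|f (v + x) - f x - 'd f x v| <= eps * `|v|.
Proof.
move=> /diff_locally /eqaddoP f_o eps eps0.
have [del del0 Hdel] := iffLR (nbhs_ballP _ _) (f_o eps eps0).
exists del => // v vdel.
have : ball (0 : V) del v by rewrite -ball_normE /ball_ /= sub0r normrN.
by move/Hdel => /=; rewrite opprD addrA.
Qed.

Lemma mean_value_segment (f : V -> W) (p v : V) (l : W) (K : R) :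
  (forall t, 0 <= t <= 1 ->
     differentiable f (p + t *: v) /\ `|'d f (p + t *: v) v - l| <= K) ->
  `|f (p + v) - f p - l| <= K.
Proof.
move=> f_seg; apply/ler_addgt0Pr => eta eta0.
pose h t := f (p + t *: v) - t *: l.
have -> : f (p + v) - f p - l = h 1 - h 0.
  by rewrite /h !scale1r !scale0r addr0 subr0 addrAC.
apply: local_lipschitz_norm_sub01 => t t01.
have [df dfK] := f_seg t t01.
set z := p + t *: v in df dfK.
have v1_gt0 : 0 < `|v| + 1 by rewrite ltr_wpDl.
have [del del0 Hdel] := differentiable_remainder_small df _ (divr_gt0 eta0 v1_gt0).
exists (del / (`|v| + 1)); first exact: divr_gt0.
move=> s st; set w := (s - t) *: v.
have w_le : `|w| <= `|s - t| * (`|v| + 1) by rewrite normrZ ler_wpM2l ?lerDl.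
have /Hdel : `|w| < del by rewrite (le_lt_trans w_le) // -ltr_pdivlMr.
have -> : w + z = p + s *: v by rewrite /w /z addrCA -scalerDl subrK.
move=> rem_small.
have -> : h s - h t = (f (p + s *: v) - f z - 'd f z w) + (s - t) *: ('d f z v - l).
  have -> : 'd f z w = (s - t) *: 'd f z v by rewrite linearZ.
  rewrite /h scalerBr addrA subrK scalerBl.
  by rewrite !opprD !opprK !addrA; congr (_ + _); exact: addrAC.
apply: (le_trans (ler_normD _ _)); rewrite normrZ mulrDl [X in _ <= X]addrC lerD //.
  apply: (le_trans rem_small); apply: le_trans (ler_wpM2l _ w_le) _.
    by rewrite ltW ?divr_gt0.
  by rewrite [_ * (`|v| + 1)]mulrC mulrA divfK ?gt_eqF.
by rewrite mulrC; apply: ler_wpM2r.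
Qed.

End MeanValueInequality.

Section NormedSquare.
Variables (R : realType) (E : normedModType R).

Lemma ball_segment (c a b : E) (r t : R) :
  ball c r a -> ball c r b -> 0 <= t <= 1 -> ball c r (a + t *: (b - a)).
Proof.
rewrite -!ball_normE /= => ca cb /andP[t0 t1].
have -> : c - (a + t *: (b - a)) = (1 - t) *: (c - a) + t *: (c - b).
  by rewrite scalerBl scale1r !scalerBr opprD opprB !addrA opprB addrA subrK.
apply: le_lt_trans (ler_normD _ _) _.
rewrite !normrZ ger0_norm ?subr_ge0 // ger0_norm //.
have [t_lt1|t_eq1] := ltP t 1; last first.
  have -> : t = 1 by apply/eqP; rewrite eq_le t1.
  by rewrite subrr mul0r add0r mul1r.
have : 0 < (1 - t) * (r - `|c - a|) by apply: mulr_gt0; lra.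
have : 0 <= t * (r - `|c - b|) by apply: mulr_ge0; lra.
nra.
Qed.

Lemma absorbing_pair_eq_of_diff_near (M L : E * E -> E) (c : E) (r : R) :
  (forall p, ball (c, c) r p ->
     differentiable M p /\ forall w, `|'d M p w - L w| <= 4^-1 * `|w|) ->
  forall a b, ball c r a -> ball c r b ->
  M (a, a) = a -> M (a, b) = b -> M (b, a) = b -> M (b, b) = b -> a = b.
Proof.
move=> M_near a b ca cb Maa Mab Mba Mbb.
set d := b - a.
have column_step x : ball c r x -> `|M (x, b) - M (x, a) - L (0, d)| <= 4^-1 * `|d|.
  move=> cx; have -> : (x, b) = (x, a) + (0, d).
    by rewrite /d [RHS]/+%R /= /add_pair /= addr0 addrC subrK.
  apply: mean_value_segment => t t01.
  have /M_near[dM dM_near] : ball (c, c) r ((x, a) + t *: (0, d)).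
    by split; rewrite /= ?scaler0 ?addr0 //; apply: ball_segment.
  split => //; apply: le_trans (dM_near _) _.
  by rewrite prod_normE /= normr0 (max_idPr (normr_ge0 d)).
have := le_trans (ler_normB _ _) (lerD (column_step b cb) (column_step a ca)).
rewrite Mbb Mba Mab Maa subrr sub0r opprB addKr normrN => d_small.
have : `|d| <= 0 by lra.
by rewrite normr_le0 subr_eq0 => /eqP.
Qed.

End NormedSquare.

Definition natural_le {S : Type} (mul : S -> S -> S) (f e : S) : Prop :=
  mul e f = f /\ mul f e = f.

Lemma commuting_idempotents_mul_le {S : Type} {mul : S -> S -> S} {e f : S} :
  associative mul -> idempotents mul e -> idempotents mul f -> mul e f = mul f e ->
  [/\ idempotents mul (mul e f), natural_le mul (mul e f) e
    & natural_le mul (mul e f) f].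
Proof.
rewrite /idempotents /= => mulA ee ff efC.
have gf : mul (mul e f) f = mul e f by rewrite -mulA ff.
have ge : mul (mul e f) e = mul e f by rewrite efC -mulA ee.
split; first by rewrite /= mulA ge gf.
- by split; rewrite ?mulA ?ee.
- by split; rewrite // mulA -efC -mulA ff.
Qed.

Section Charts.
Context {R : realType} {E : normedModType R} {S : topologicalType}.
Context {U : set S} {phi : S -> E} {psi : E -> S}.
Hypothesis chart : is_chart U phi psi.

Lemma chart_continuous_at {x} : U x ->
  {for x, continuous phi} /\ {for phi x, continuous psi}.
Proof.
have [oU oPU _ phic psic] := chart => Ux; split.
  by move: phic; rewrite continuous_open_subspace // => /(_ x (mem_set Ux)).
move: psic; rewrite continuous_open_subspace // => /(_ (phi x)); apply.
by apply: mem_set; exists x.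
Qed.

Lemma nbhs_chart_mul_domain {mul : S -> S -> S} {e} :
  continuous (fun p : S * S => mul p.1 p.2) -> U e -> mul e e = e ->
  \forall ab \near (phi e, phi e),
    (phi @` U) ab.1 /\ (phi @` U) ab.2 /\ U (mul (psi ab.1) (psi ab.2)).
Proof.
move=> mul_cont Ue ee.
have [oU oPU psiphi _ _] := chart.
have [_ psi_cont] := chart_continuous_at Ue.
have nPe : nbhs (phi e) (phi @` U) by apply: open_nbhs_nbhs; split => //; exists e.
near=> ab; split; [|split].
- by near: ab; apply: cvg_fst.
- by near: ab; apply: cvg_snd.
- near: ab.
  have psi2 : (fun ab : E * E => (psi ab.1, psi ab.2)) @ (phi e, phi e) --> (e, e).
    rewrite -{3 4}(psiphi e Ue); apply: cvg_pair.
      by apply: (cvg_comp fst psi _ psi_cont); exact: cvg_fst.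
    by apply: (cvg_comp snd psi _ psi_cont); exact: cvg_snd.
  have := cvg_comp _ _ psi2 (mul_cont (e, e)); rewrite /= ee => /(_ U).
  by apply; apply: open_nbhs_nbhs.
Unshelve. all: by end_near. Qed.

End Charts.

Lemma idempotents_natural_le_locally_eq {R : realType} {E : completeNormedModType R}
  {S : topologicalType} {mul : S -> S -> S} {e : S} :
  C1_differentiable_semigroup E mul -> idempotents mul e ->
  exists2 N : set S, nbhs e N & forall x y, N x -> N y ->
    idempotents mul x -> idempotents mul y -> natural_le mul y x -> x = y.
Proof.
move=> [_ _ mul_cont [I [U [phi [psi [charts cover _ C1mul]]]]]] ee.
have [i Ue] := cover e.
have [_ _ psiphi _ _] := charts i.
have [phi_cont _] := chart_continuous_at (charts i) Ue.
have [M_diff M_C1] := C1mul i i i.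
set M := fun ab : E * E => phi i (mul (psi i ab.1) (psi i ab.2)) in M_diff M_C1.
set c := phi i e.
have M_dom_c : (phi i @` U i) c /\ (phi i @` U i) c /\ U i (mul (psi i c) (psi i c)).
  by rewrite /c psiphi // (ee : mul e e = e); do 2 split => //; exists e.
have M_near_c := M_C1 (c, c) M_dom_c 4^-1 ltac:(by []).
have [r r_gt0 M_near] := iffLR (nbhs_ballP _ _)
  (filterI (nbhs_chart_mul_domain (charts i) mul_cont Ue ee) M_near_c).
exists (U i `&` phi i @^-1` ball c r).
  apply: filterI; first by apply: open_nbhs_nbhs; split => //; have [] := charts i.
  exact: phi_cont (nbhsx_ballx c r r_gt0).
move=> x y [Ux cx] [Uy cy] xx yy [xy yx].
suff : phi i x = phi i y by move/(congr1 (psi i)); rewrite !psiphi.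
apply: (@absorbing_pair_eq_of_diff_near _ _ M ('d M (c, c)) c r _ _ _ cx cy);
  rewrite /M /= ?psiphi // ?(xx : mul x x = x) ?xy ?yx ?(yy : mul y y = y) //.
by move=> p /M_near[p_dom dM_p]; split; [exact: M_diff | exact: dM_p].
Qed.

Theorem corollary6p3 (R : realType) (E : completeNormedModType R)
  (S : topologicalType) (mul : S -> S -> S) :
  C1_differentiable_semigroup E mul ->
  (forall e f, idempotents mul e -> idempotents mul f -> mul e f = mul f e) ->
  forall e, idempotents mul e ->
    exists U : set S, [/\ open U, U e &
      forall f, U f -> idempotents mul f -> f = e].
Proof.
move=> semigroup idemC e ee.
have [N Ne N_eq] := idempotents_natural_le_locally_eq semigroup ee.
have [_ mulA mul_cont _] := semigroup.
have mul_e_cont : {for e, continuous (mul e)}.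
  apply: (@continuous_comp _ _ _ (fun x => (e, x)) (fun p => mul p.1 p.2)).
    by apply: cvg_pair; [exact: cvg_cst | exact: cvg_id].
  exact: mul_cont.
have : nbhs e (N `&` mul e @^-1` N).
  by apply: filterI => //; apply: mul_e_cont; rewrite (ee : mul e e = e).
rewrite nbhsE => -[W [oW We] W_N].
exists W; split => // f Wf ff.
have [Nf Nef] := W_N f Wf; have [Ne_W _] := W_N e We.
have [gg [eg ge] [fg gf]] := commuting_idempotents_mul_le mulA ee ff (idemC e f ee ff).
by rewrite (N_eq f _ Nf Nef ff gg (conj fg gf)) (N_eq e _ Ne_W Nef ee gg (conj eg ge)).
Qed.
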